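(* Let $N\ge1$, let $K$ be a nonempty compact subset of $\mathbb{R}_+^N=[0,\infty)^N$, let $X$ be a compact Hausdorff space, and let $T_n$ ($n\in\mathbb{N}$) and $A$ be weakly nonlinear and monotone operators from $C(K)$ into $C(X)$ such that $A(1)(x)>0$ for all $x\in X$ and $$A(1)\,A\Big(\sum_{k=1}^N\mathrm{pr}_k^2\Big)=\sum_{k=1}^N\big(A(-\mathrm{pr}_k)\big)^2 .$$ If $T_n(g)\to A(g)$ uniformly on $X$ for each of the functions $g=1,\,-\mathrm{pr}_1,\dots,-\mathrm{pr}_N,\,\sum_{k=1}^N\mathrm{pr}_k^2$, then $T_n(f)\to A(f)$ uniformly on $X$ for every $f\in C(K)$.
   Context: For a compact space $Y$, $C(Y)$ denotes the Banach lattice of continuous real-valued functions on $Y$ with the pointwise order and the sup norm; products and squares of functions are pointwise, and $1$ denotes the constant function one. $\mathrm{pr}_k:K\to\mathbb{R}$ is the $k$-th coordinate projection. An operator $T:C(K)\to C(X)$ is weakly nonlinear if $T(f+g)\le T(f)+T(g)$ and $T(\alpha f)=\alpha T(f)$ for all $f,g$ and $\alpha\ge0$, and $T(f+\alpha\cdot1)=T(f)+\alpha T(1)$ for all $f$ and $\alpha\ge0$. $T$ is monotone if $f\le g$ implies $T(f)\le T(g)$. *)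

From HB Require Import structures.
From mathcomp Require Import all_boot all_order all_algebra.
From mathcomp Require Import all_classical all_reals all_analysis.
Set Implicit Arguments. Unset Strict Implicit. Unset Printing Implicit Defensive.
Import Order.TTheory GRing.Theory Num.Theory.
Import numFieldNormedType.Exports.
Local Open Scope classical_set_scope.
Local Open Scope ring_scope.

(* An element of C(K) is represented by a function f : 'rV[R]_N -> R that is
   continuous on K (i.e. its restriction to K is continuous); values outside K
   are irrelevant: every operator considered below is required to be monotone
   w.r.t. the order of C(K) (pointwise on K), hence depends only on f|_K. *)

Section Defs.
Variables (R : realType) (N : nat) (X : topologicalType).

Definition inCK (K : set 'rV[R]_N) (f : 'rV[R]_N -> R) : Prop :=
  {within K, continuous f}.

Definition pr (k : 'I_N) : 'rV[R]_N -> R := fun x => x ord0 k.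

Definition maps_CK_CX (K : set 'rV[R]_N) (T : ('rV[R]_N -> R) -> X -> R) : Prop :=
  forall f, inCK K f -> continuous (T f).

Definition weakly_nonlinear (K : set 'rV[R]_N) (T : ('rV[R]_N -> R) -> X -> R) : Prop :=
  (forall f g, inCK K f -> inCK K g ->
     forall x, T (fun y => f y + g y) x <= T f x + T g x) /\
  (forall f (a : R), inCK K f -> 0 <= a ->
     T (fun y => a * f y) = (fun x => a * T f x)) /\
  (forall f (a : R), inCK K f -> 0 <= a ->
     T (fun y => f y + a) = (fun x => T f x + a * T (fun _ => 1) x)).

Definition monotone_op (K : set 'rV[R]_N) (T : ('rV[R]_N -> R) -> X -> R) : Prop :=
  forall f g, inCK K f -> inCK K g -> (forall y, K y -> f y <= g y) ->
    forall x, T f x <= T g x.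

Definition unif_cvg (u : nat -> X -> R) (v : X -> R) : Prop :=
  forall e : R, 0 < e -> exists n0 : nat, forall n, (n0 <= n)%N ->
    forall x, `|u n x - v x| < e.
End Defs.

From HB Require Import structures.
From mathcomp Require Import all_boot all_order all_algebra.
From mathcomp Require Import all_classical all_reals all_analysis.
From mathcomp Require Import ring lra.
Import Order.TTheory GRing.Theory Num.Theory.
Import numFieldNormedType.Exports.
Local Open Scope classical_set_scope.
Local Open Scope ring_scope.

(* Sublinearity bounds A(|. - z|^2)(x) by the quadratic moment
   A(sum pr_k^2)(x) + sum_k 2 z_k A(-pr_k)(x) + |z|^2 A(1)(x), and the hypothesis on A
   says that this moment vanishes at z(x) = (-A(-pr_k)(x) / A(1)(x))_k; as A(1)(x) > 0
   and A is monotone, z(x) lies in K.  A continuous f on the compact K satisfies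
   |f y - f z| <= eps + c |y - z|^2, so monotonicity squeezes T_n(f)(x) around
   f(z(x)) T_n(1)(x) up to eps T_n(1)(x) + c (moment of T_n at z(x)), and A(f)(x) around
   f(z(x)) A(1)(x) up to eps A(1)(x).  The moment of T_n at z(x) involves only the test
   functions, so it tends to that of A, i.e. to 0, uniformly in x. *)

Lemma continuous_compact_bounded {R : realType} {T : topologicalType}
    {A : set T} {g : T -> R} :
  {within A, continuous g} -> compact A -> exists M, forall y, A y -> `|g y| <= M.
Proof.
move=> gA cA; have [M [_ HM]] := compact_bounded (continuous_compact gA cA).
by exists (M + 1) => y Ay; apply: (HM (M + 1)); [rewrite ltrDl | exists y].
Qed.

Section SquaredDistance.
Context {R : realType} {N : nat}.
Implicit Types (y z : 'rV[R]_N) (f g h : 'rV[R]_N -> R).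

Definition sqdist z y : R := \sum_(k < N) (pr k y - pr k z) ^+ 2.

Definition moment_weight z : R := 1 + \sum_(k < N) 2 * pr k z + \sum_(k < N) pr k z ^+ 2.

Lemma continuous_sumr {I : Type} {r : seq I} {F : I -> 'rV[R]_N -> R} :
  (forall i, continuous (F i)) -> continuous (fun y => \sum_(i <- r) F i y).
Proof. by move=> Fc; apply: continuous_big => //; exact: add_continuous. Qed.

Lemma continuous_mull (a : R) {g} : continuous g -> continuous (fun y => a * g y).
Proof.
by move=> g_cont y; apply: (@continuousM _ _ (fun=> a) g); [exact: cst_continuous | exact: g_cont].
Qed.

Lemma continuous_addr {g h} :
  continuous g -> continuous h -> continuous (fun y => g y + h y).
Proof.
by move=> g_cont h_cont y; apply: (@continuousD _ _ _ g h); [exact: g_cont | exact: h_cont].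
Qed.

Lemma continuous_addr_cst {g} (a : R) : continuous g -> continuous (fun y => g y + a).
Proof. by move=> g_cont; apply: continuous_addr g_cont _; exact: cst_continuous. Qed.

Lemma continuous_pr k : continuous (pr k : 'rV[R]_N -> R).
Proof. exact: coord_continuous. Qed.

Lemma continuous_Npr k : continuous (fun y : 'rV[R]_N => - pr k y).
Proof. by move=> y; apply: continuousN; exact: continuous_pr. Qed.

Lemma continuous_sum_sqr : continuous (fun y : 'rV[R]_N => \sum_(k < N) pr k y ^+ 2).
Proof.
by apply: continuous_sumr => k y; exact: continuousM (continuous_pr k y) (continuous_pr k y).
Qed.

Lemma continuous_sqdist z : continuous (sqdist z).
Proof.
have ck k : continuous (fun y => pr k y - pr k z).
  by move=> y; apply: continuousB; [exact: continuous_pr | exact: cst_continuous].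
by apply: continuous_sumr => k y; exact: continuousM (ck k y) (ck k y).
Qed.

Lemma continuous_moment_weight : continuous moment_weight.
Proof.
apply: continuous_addr continuous_sum_sqr; apply: continuous_addr; first exact: cst_continuous.
by apply: continuous_sumr => k; apply: continuous_mull; exact: continuous_pr.
Qed.

Lemma sqdist_ge0 z y : 0 <= sqdist z y.
Proof. by apply: sumr_ge0 => k _; exact: sqr_ge0. Qed.

Lemma sqdist_ge_sqr {z y} {d : R} : 0 < d -> ~ ball z d y -> d ^+ 2 <= sqdist z y.
Proof.
move=> d0 zy; have [k dk] : exists k, d <= `|pr k z - pr k y|.
  apply: contrapT => nk; apply: zy; split => // i k.
  by rewrite (ord1 i) /ball /= ltNge; apply/negP => dk; apply: nk; exists k.
rewrite /sqdist (bigD1 k) //= -[(pr k y - _) ^+ 2]real_normK ?num_real // distrC.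
apply: ler_wpDr; first by apply: sumr_ge0 => i _; exact: sqr_ge0.
by apply: lerXn2r dk; rewrite nnegrE // ltW.
Qed.

Context {K : set 'rV[R]_N}.

Lemma inCK_continuous {f} : continuous f -> inCK K f.
Proof. exact: continuous_subspaceT. Qed.

Lemma inCK_cst (a : R) : inCK K (fun _ => a).
Proof. exact/inCK_continuous/cst_continuous. Qed.

Lemma inCK_ball {f z} {e : R} : inCK K f -> K z -> 0 < e ->
  exists2 d, 0 < d & forall y, K y -> ball z d y -> `|f z - f y| < e.
Proof.
move=> fK Kz e0.
have := (subspace_continuousP K f).1 fK z Kz (ball (f z) e) (nbhsx_ballx _ _ e0).
rewrite /= nbhs_simpl /within /= => /nbhs_ballP [d d0 zd].
by exists d => // y Ky /zd /(_ Ky).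
Qed.

(* Near z0, the constant 8M/d^2 makes the quadratic term dominate 2M >= |f y - f z|
   as soon as y is outside the ball of continuity around z0. *)
Lemma quadratic_modulus_near {f} {eps M : R} {z0} :
  inCK K f -> (forall y, K y -> `|f y| <= M) -> K z0 -> 0 < eps ->
  exists2 d, 0 < d & forall z y (c : R), K z -> K y -> ball z0 (d / 2) z ->
    8 * M / d ^+ 2 <= c -> `|f y - f z| <= eps + c * sqdist z y.
Proof.
move=> fK fM Kz0 eps0; have M0 : 0 <= M by apply: le_trans (fM _ Kz0).
have [d d0 fz0] := inCK_ball fK Kz0 (divr_gt0 eps0 (ltr0Sn _ 1)).
exists d => // z y c Kz Ky z0z cM.
have c0 : 0 <= c by apply: le_trans cM; rewrite divr_ge0 ?sqr_ge0 ?mulr_ge0.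
have cq0 : 0 <= c * sqdist z y by rewrite mulr_ge0 ?sqdist_ge0.
have [z0y|z0y] := pselect (ball z0 d y).
  have /(fz0 _ Kz) fz : ball z0 d z by apply: le_ball z0z; lra.
  have fy := fz0 _ Ky z0y.
  have := ler_normB (f z0 - f z) (f z0 - f y).
  have -> : (f z0 - f z) - (f z0 - f y) = f y - f z by ring.
  lra.
have zy : ~ ball z (d / 2) y by move=> /(ball_triangle z0z); rewrite -splitr.
have d2 : 0 < d / 2 by lra.
have : 2 * M <= c * sqdist z y.
  have -> : 2 * M = 8 * M / d ^+ 2 * (d / 2) ^+ 2 by field; exact: lt0r_neq0.
  apply: ler_pM cM (sqdist_ge_sqr d2 zy); rewrite ?sqr_ge0 //.
  by rewrite divr_ge0 ?sqr_ge0 ?mulr_ge0.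
have : `|f y - f z| <= `|f y| + `|f z| by exact: ler_normB.
have := fM _ Ky; have := fM _ Kz; lra.
Qed.

Lemma compact_quadratic_modulus {f} {eps : R} : compact K -> inCK K f -> 0 < eps ->
  exists2 c, 0 <= c &
    forall z, K z -> forall y, K y -> `|f y - f z| <= eps + c * sqdist z y.
Proof.
move=> cK fK eps0; have [M fM] := continuous_compact_bounded fK cK.
pose P c z := K z -> forall y, K y -> `|f y - f z| <= eps + c * sqdist z y.
have [z0 Kz0|C [_ PC]] := (compact_near_coveringP K).1 cK R (pinfty_nbhs R) P _.
  have [d d0 near_z0] := quadratic_modulus_near fK fM Kz0 eps0.
  exists (ball z0 (d / 2), [set c | 8 * M / d ^+ 2 < c]).
    split; first by apply: nbhsx_ballx; lra.
    by exists (8 * M / d ^+ 2); rewrite num_real.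
  by case=> z c [/= z0z cM] Kz y Ky; apply: near_z0 => //; exact: ltW.
exists (Num.max C 0 + 1); first by rewrite addr_ge0 // le_max lexx orbT.
move=> z Kz y Ky; apply: (PC (Num.max C 0 + 1)) => //.
have : C <= Num.max C 0 by rewrite le_max lexx.
lra.
Qed.

End SquaredDistance.

(* sqdist z y = sum_k pr_k y ^ 2 + sum_k 2 z_k (- pr_k y) + |z| ^ 2, so for z >= 0
   sublinearity bounds S (sqdist z) by this moment. *)
Definition quad_moment {R : realType} {N : nat} {X : Type}
    (S : ('rV[R]_N -> R) -> X -> R) (z : 'rV[R]_N) (x : X) : R :=
  S (fun y => \sum_(k < N) pr k y ^+ 2) x
  + \sum_(k < N) (2 * pr k z) * S (fun y => - pr k y) x
  + (\sum_(k < N) pr k z ^+ 2) * S (fun _ => 1) x.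

Section WeaklyNonlinearMonotoneOperator.
Context {R : realType} {N : nat} {X : topologicalType} {K : set 'rV[R]_N}
  {S : ('rV[R]_N -> R) -> X -> R}.
Hypotheses (S_wnl : weakly_nonlinear K S) (S_mono : monotone_op K S).
Implicit Types (f g h : 'rV[R]_N -> R) (z : 'rV[R]_N) (x : X).

Lemma op_cst0 x : S (fun _ => 0) x = 0.
Proof.
have [_ [S_hom _]] := S_wnl.
have := S_hom (fun _ => 1) 0 (inCK_cst _) (lexx 0).
by rewrite (funext (fun _ => mul0r 1)) => ->; rewrite mul0r.
Qed.

Lemma op_addr_cst h (a : R) x : inCK K h ->
  S (fun y => h y + a) x = S h x + a * S (fun _ => 1) x.
Proof.
have [_ [_ S_tra]] := S_wnl; move=> hK.
have [a0|a0] := leP 0 a; first by rewrite (S_tra h a hK a0).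
have haK : inCK K (fun y => h y + a).
  by move=> y; apply: continuousD; [exact: hK | exact: cvg_cst].
have := S_tra _ (- a) haK; rewrite oppr_ge0 => /(_ (ltW a0)).
rewrite (funext (fun y => addrK a (h y))) => /(congr1 (fun F => F x)) /= ->.
ring.
Qed.

Lemma op_cst (a : R) x : S (fun _ => a) x = a * S (fun _ => 1) x.
Proof.
have := op_addr_cst (fun _ => 0) a x (inCK_cst _).
by rewrite (funext (fun _ => add0r a)) => ->; rewrite op_cst0 add0r.
Qed.

Lemma op_opp_ge h x : inCK K h -> inCK K (fun y => - h y) ->
  - S h x <= S (fun y => - h y) x.
Proof.
have [S_add _] := S_wnl; move=> hK hNK.
have := S_add _ _ hK hNK x; rewrite (funext (fun y => subrr (h y))).
by rewrite op_cst0 -lerBlDl sub0r.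
Qed.

Lemma op_sum_le {I : Type} (r : seq I) (w : I -> R) (hs : I -> 'rV[R]_N -> R) g x :
  (forall i, 0 <= w i) -> (forall i, continuous (hs i)) -> continuous g ->
  S (fun y => g y + \sum_(i <- r) w i * hs i y) x
    <= S g x + \sum_(i <- r) w i * S (hs i) x.
Proof.
have [S_add [S_hom _]] := S_wnl; move=> w_ge0 hs_cont.
elim: r g => [|i r IHr] g g_cont.
  by rewrite big_nil addr0 (funext (fun y => etrans (congr1 _ (big_nil _ _ _ _)) (addr0 _))).
have whs_cont := continuous_mull (w i) (hs_cont i).
rewrite (funext (fun y => etrans (congr1 _ (big_cons _ _ _ _ _ _)) (addrA _ _ _))).
apply: le_trans (IHr _ (continuous_addr g_cont whs_cont)) _; rewrite big_cons addrA lerD2r.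
have := S_add _ _ (inCK_continuous g_cont) (inCK_continuous whs_cont) x.
by rewrite (S_hom _ _ (inCK_continuous (hs_cont i)) (w_ge0 i)).
Qed.

Lemma op_sqdist_le z x : (forall k, 0 <= pr k z) -> S (sqdist z) x <= quad_moment S z x.
Proof.
move=> z_ge0; pose g (y : 'rV[R]_N) : R := \sum_(k < N) pr k y ^+ 2.
pose lin (y : 'rV[R]_N) : R := \sum_(k < N) (2 * pr k z) * - pr k y.
have -> : sqdist z = fun y => (g y + lin y) + \sum_(k < N) pr k z ^+ 2.
  apply: funext => y; rewrite /sqdist /g /lin -!big_split /=.
  by apply: eq_bigr => k _; ring.
have lin_cont : continuous lin.
  by apply: continuous_sumr => k; apply: continuous_mull; exact: continuous_Npr.
rewrite op_addr_cst; last exact/inCK_continuous/continuous_addr/lin_cont/continuous_sum_sqr.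
rewrite lerD2r; apply: op_sum_le => [k|k|]; [exact: mulr_ge0 | exact: continuous_Npr |].
exact: continuous_sum_sqr.
Qed.

Lemma op_sandwich {f z} {eps c : R} x :
  inCK K f -> (forall k, 0 <= pr k z) -> 0 <= c ->
  (forall y, K y -> `|f y - f z| <= eps + c * sqdist z y) ->
  `|S f x - f z * S (fun _ => 1) x| <= eps * S (fun _ => 1) x + c * quad_moment S z x.
Proof.
have [_ [S_hom _]] := S_wnl; move=> fK z_ge0 c0 f_mod.
have cq_cont := continuous_mull c (continuous_sqdist z).
have Ncq_cont : continuous (fun y => - (c * sqdist z y)).
  by move=> y; apply: (@continuousN _ _ _ (fun y => c * sqdist z y)); exact: cq_cont.
have Scq : S (fun y => c * sqdist z y) x <= c * quad_moment S z x.
  rewrite (S_hom _ _ (inCK_continuous (continuous_sqdist z)) c0).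
  by rewrite ler_wpM2l // op_sqdist_le.
have SNcq := op_opp_ge _ x (inCK_continuous cq_cont) (inCK_continuous Ncq_cont).
have upper : S f x <= S (fun y => c * sqdist z y + (f z + eps)) x.
  apply: S_mono => // [|y Ky]; last by have := f_mod y Ky; rewrite ler_norml; lra.
  exact/inCK_continuous/continuous_addr_cst.
have lower : S (fun y => - (c * sqdist z y) + (f z - eps)) x <= S f x.
  apply: S_mono => // [|y Ky]; last by have := f_mod y Ky; rewrite ler_norml; lra.
  exact/inCK_continuous/continuous_addr_cst.
rewrite op_addr_cst in upper; last exact: inCK_continuous.
rewrite op_addr_cst in lower; last exact: inCK_continuous.
rewrite ler_norml; apply/andP; split; lra.
Qed.

(* The point -A(-pr)(x) / A(1)(x) plays the role of the barycenter A(pr)(x) / A(1)(x)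
   of the linear theory. *)
Definition barycenter x : 'rV[R]_N :=
  \row_k (- S (fun y => - pr k y) x / S (fun _ => 1) x).

Lemma quad_moment_barycenter {x} : 0 < S (fun _ => 1) x ->
  S (fun _ => 1) x * S (fun y => \sum_(k < N) pr k y ^+ 2) x
    = \sum_(k < N) S (fun y => - pr k y) x ^+ 2 ->
  quad_moment S (barycenter x) x = 0.
Proof.
set a := S _ x => a_gt0 S_eq; have a_neq0 : a != 0 by exact: lt0r_neq0.
set B := \sum_(k < N) S (fun y => - pr k y) x ^+ 2 in S_eq *.
have p_eq k : pr k (barycenter x) = - S (fun y => - pr k y) x / a by rewrite /pr mxE.
have lin : \sum_(k < N) 2 * pr k (barycenter x) * S (fun y => - pr k y) x = - 2 / a * B.
  by rewrite /B mulr_sumr; apply: eq_bigr => k _; rewrite p_eq; field.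
have sq : \sum_(k < N) pr k (barycenter x) ^+ 2 = B / a ^+ 2.
  by rewrite /B mulr_suml; apply: eq_bigr => k _; rewrite p_eq; field.
have Ssq : S (fun y => \sum_(k < N) pr k y ^+ 2) x = B / a by rewrite -S_eq; field.
by rewrite /quad_moment lin sq Ssq -/a; field.
Qed.

Hypothesis K_ge0 : K `<=` [set y | forall k, 0 <= y ord0 k].

Lemma op_Npr_le0 k x : S (fun y => - pr k y) x <= 0.
Proof.
rewrite -(op_cst0 x); apply: S_mono; [exact/inCK_continuous/continuous_Npr | exact: inCK_cst |].
by move=> y /K_ge0 y_ge0; rewrite oppr_le0; exact: y_ge0.
Qed.

Lemma barycenter_ge0 {x} : 0 < S (fun _ => 1) x -> forall k, 0 <= pr k (barycenter x).
Proof. by move=> S1_gt0 k; rewrite /pr mxE divr_ge0 ?oppr_ge0 ?op_Npr_le0 ?ltW. Qed.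

Lemma barycenter_in {x} : closed K -> 0 < S (fun _ => 1) x ->
  S (fun _ => 1) x * S (fun y => \sum_(k < N) pr k y ^+ 2) x
    = \sum_(k < N) S (fun y => - pr k y) x ^+ 2 ->
  K (barycenter x).
Proof.
move=> K_closed S1_gt0 S_eq; set p := barycenter x; apply: contrapT => pNK.
have /nbhs_ballP [e e_gt0 pe] : nbhs p (~` K).
  by have := K_closed; rewrite -openC openE; exact.
have : S (fun _ => e ^+ 2) x <= S (sqdist p) x.
  apply: S_mono; [exact: inCK_cst | exact/inCK_continuous/continuous_sqdist |].
  by move=> y Ky; apply: sqdist_ge_sqr e_gt0 _ => /pe.
rewrite op_cst; have := op_sqdist_le p x (barycenter_ge0 S1_gt0).
rewrite quad_moment_barycenter // => Sq_le0.
have : 0 < e ^+ 2 * S (fun _ => 1) x by rewrite mulr_gt0 // exprn_gt0.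
lra.
Qed.

End WeaklyNonlinearMonotoneOperator.
Arguments barycenter {R N X} S x.

Lemma quad_moment_sub_le {R : realType} {N : nat} {X : Type}
    {S A : ('rV[R]_N -> R) -> X -> R} {z x} {eta : R} :
  (forall k, 0 <= pr k z) ->
  `|S (fun y => \sum_(k < N) pr k y ^+ 2) x - A (fun y => \sum_(k < N) pr k y ^+ 2) x| < eta ->
  (forall k, `|S (fun y => - pr k y) x - A (fun y => - pr k y) x| < eta) ->
  `|S (fun _ => 1) x - A (fun _ => 1) x| < eta ->
  quad_moment S z x - quad_moment A z x <= eta * moment_weight z.
Proof.
move=> z_ge0; rewrite ltr_norml => /andP [_ sq_lt] pr_lt.
rewrite ltr_norml => /andP [_ one_lt].
have lin : \sum_(k < N) 2 * pr k z * S (fun y => - pr k y) x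
    <= \sum_(k < N) 2 * pr k z * A (fun y => - pr k y) x + eta * \sum_(k < N) 2 * pr k z.
  rewrite mulr_sumr -big_split; apply: ler_sum => k _ /=.
  have z2_ge0 : 0 <= 2 * pr k z by rewrite mulr_ge0.
  have /ltr_normlP [_ /ltW/(ler_wpM2l z2_ge0)] := pr_lt k; lra.
have zz_ge0 : 0 <= \sum_(k < N) pr k z ^+ 2 by apply: sumr_ge0 => k _; exact: sqr_ge0.
have := ler_wpM2l zz_ge0 (ltW one_lt); rewrite /quad_moment /moment_weight; lra.
Qed.

Lemma op_dist_le {R : realType} {N : nat} {X : topologicalType} {K : set 'rV[R]_N}
    {T A : ('rV[R]_N -> R) -> X -> R} {f z} {eps c eta : R} {x} :
  weakly_nonlinear K T -> monotone_op K T -> weakly_nonlinear K A -> monotone_op K A ->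
  inCK K f -> (forall k, 0 <= pr k z) -> 0 <= c ->
  (forall y, K y -> `|f y - f z| <= eps + c * sqdist z y) ->
  quad_moment A z x = 0 ->
  `|T (fun y => \sum_(k < N) pr k y ^+ 2) x - A (fun y => \sum_(k < N) pr k y ^+ 2) x| < eta ->
  (forall k, `|T (fun y => - pr k y) x - A (fun y => - pr k y) x| < eta) ->
  `|T (fun _ => 1) x - A (fun _ => 1) x| < eta ->
  `|T f x - A f x| <= `|f z| * eta + eps * (T (fun _ => 1) x + A (fun _ => 1) x)
                      + c * (eta * moment_weight z).
Proof.
move=> Tw Tm Aw Am fK z_ge0 c0 f_mod A_moment sq_near pr_near one_near.
have T_sandwich := op_sandwich Tw Tm x fK z_ge0 c0 f_mod.
have A_sandwich := op_sandwich Aw Am x fK z_ge0 c0 f_mod.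
have T_moment := quad_moment_sub_le z_ge0 sq_near pr_near one_near.
rewrite A_moment mulr0 addr0 subr0 in A_sandwich T_moment.
have one_term : `|f z * (T (fun _ => 1) x - A (fun _ => 1) x)| <= `|f z| * eta.
  by rewrite normrM; apply: ler_wpM2l => //; exact: ltW.
have triangle : `|T f x - A f x| <= `|T f x - f z * T (fun _ => 1) x|
    + `|f z * (T (fun _ => 1) x - A (fun _ => 1) x)| + `|A f x - f z * A (fun _ => 1) x|.
  apply: le_trans (ler_distD (f z * T (fun _ => 1) x) _ _) _; rewrite -addrA lerD2l.
  apply: le_trans (ler_distD (f z * A (fun _ => 1) x) _ _) _.
  by rewrite mulrBr [`|f z * _ - A f x|]distrC.
have := ler_wpM2l c0 T_moment; lra.
Qed.

Section UniformConvergence.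
Context {R : realType} {X : topologicalType}.

Lemma unif_cvg_common {I : finType} {u : I -> nat -> X -> R} {v : I -> X -> R} {eta : R} :
  0 < eta -> (forall i, unif_cvg (u i) (v i)) ->
  exists n0, forall n, (n0 <= n)%N -> forall i x, `|u i n x - v i x| < eta.
Proof.
move=> eta0 u_cvg; have [n_ n_ok] := choice (fun i => u_cvg i eta eta0).
exists (\max_i n_ i) => n n_le i; apply: n_ok; exact: leq_trans (leq_bigmax i) n_le.
Qed.

Lemma unif_cvg_eps_eta {u : nat -> X -> R} {v : X -> R} (B : R) :
  (forall eps, 0 < eps -> exists L, forall eta, 0 < eta -> eta <= 1 ->
     exists n0, forall n, (n0 <= n)%N -> forall x, `|u n x - v x| <= eps * B + eta * L) ->
  unif_cvg u v.
Proof.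
move=> est e e0.
have small (a b : R) : 0 < a -> a * (`|b| + 1) <= e / 2 -> a * b < e / 2.
  move=> a0 ab; apply: le_lt_trans (ler_wpM2l (ltW a0) (ler_norm b)) _.
  by apply: lt_le_trans ab; rewrite ltr_pM2l // ltrDl.
have B1 : 0 < `|B| + 1 by rewrite ltr_pwDr.
have [L estL] := est (e / 2 / (`|B| + 1)) (divr_gt0 (divr_gt0 e0 (ltr0Sn _ 1)) B1).
have L1 : 0 < `|L| + 1 by rewrite ltr_pwDr.
pose eta := Num.min 1 (e / 2 / (`|L| + 1)).
have eta0 : 0 < eta by rewrite lt_min ltr01 !divr_gt0.
have eta1 : eta <= 1 by rewrite ge_min lexx.
have [n0 est_n] := estL eta eta0 eta1.
exists n0 => n n0n x; apply: le_lt_trans (est_n n n0n x) _.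
have epsB : e / 2 / (`|B| + 1) * B < e / 2.
  by apply: small; rewrite ?divr_gt0 // divfK ?lt0r_neq0.
have etaL : eta * L < e / 2.
  apply: small => //; have : eta <= e / 2 / (`|L| + 1) by rewrite ge_min lexx orbT.
  by move/(ler_wpM2r (ltW L1)); rewrite divfK ?lt0r_neq0.
lra.
Qed.

End UniformConvergence.

Theorem mainTheorem3 (R : realType) (N : nat) (K : set 'rV[R]_N)
  (X : topologicalType)
  (T : nat -> ('rV[R]_N -> R) -> X -> R) (A : ('rV[R]_N -> R) -> X -> R) :
  (0 < N)%N ->
  K !=set0 -> compact K -> K `<=` [set x | forall k, 0 <= x ord0 k] ->
  hausdorff_space X -> compact [set: X] ->
  (forall n, maps_CK_CX K (T n)) -> maps_CK_CX K A ->
  (forall n, weakly_nonlinear K (T n)) -> weakly_nonlinear K A ->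
  (forall n, monotone_op K (T n)) -> monotone_op K A ->
  (forall x, 0 < A (fun _ => 1) x) ->
  (forall x, A (fun _ => 1) x * A (fun y => \sum_(k < N) pr k y ^+ 2) x
             = \sum_(k < N) (A (fun y => - pr k y) x) ^+ 2) ->
  unif_cvg (fun n => T n (fun _ => 1)) (A (fun _ => 1)) ->
  (forall k : 'I_N, unif_cvg (fun n => T n (fun y => - pr k y)) (A (fun y => - pr k y))) ->
  unif_cvg (fun n => T n (fun y => \sum_(k < N) pr k y ^+ 2))
           (A (fun y => \sum_(k < N) pr k y ^+ 2)) ->
  forall f, inCK K f -> unif_cvg (fun n => T n f) (A f).
Proof.
move=> _ _ K_cpt K_ge0 _ X_cpt _ Ac Tw Aw Tm Am A1_gt0 A_eq one_cvg pr_cvg sq_cvg f fK.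
have K_closed := compact_closed (@norm_hausdorff _ _) K_cpt.
have [a A1_le] := continuous_compact_bounded (continuous_subspaceT (Ac _ (inCK_cst 1))) X_cpt.
have [M f_le] := continuous_compact_bounded fK K_cpt.
have [W weight_le] :=
  continuous_compact_bounded (inCK_continuous continuous_moment_weight) K_cpt.
apply: (unif_cvg_eps_eta (2 * a + 1)) => eps eps0.
have [c c0 f_mod] := compact_quadratic_modulus K_cpt fK eps0.
exists (M + c * W) => eta eta0 eta1.
have [n1 one_near] := one_cvg eta eta0.
have [n2 sq_near] := sq_cvg eta eta0.
have [n3 pr_near] := unif_cvg_common eta0 pr_cvg.
exists (maxn n1 (maxn n2 n3)) => n; rewrite !geq_max => /and3P [n1n n2n n3n] x.
have zK := barycenter_in Aw Am K_ge0 K_closed (A1_gt0 x) (A_eq x).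
have := op_dist_le (Tw n) (Tm n) Aw Am fK (barycenter_ge0 Aw Am K_ge0 (A1_gt0 x)) c0
  (f_mod _ zK) (quad_moment_barycenter (A1_gt0 x) (A_eq x))
  (sq_near n n2n x) (fun k => pr_near n n3n k x) (one_near n n1n x).
have := f_le _ zK; move: (one_near n n1n x) (A1_le x I) (weight_le _ zK).
rewrite ltr_norml 2!ler_norml => /andP [_ T1_lt] /andP [_ A1x_le] /andP [_ wz_le] fz_le.
have := ler_wpM2r (ltW eta0) fz_le.
have := ler_wpM2l c0 (ler_wpM2l (ltW eta0) wz_le).
have : T n (fun _ => 1) x + A (fun _ => 1) x <= 2 * a + 1 by lra.
move/(ler_wpM2l (ltW eps0)); lra.
Qed.
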